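(* Assume the Setting and consider Algorithm 2 with $0<\mu_0<4\sigma(1-\eta)$. Then $x_n\in B_{2\rho}(x_0)$ for all $n\ge0$, and for every solution $\hat x$ of $F(x)=y$ with $\hat x\in B_{2\rho}(x_0)\cap\mathrm{dom}(\mathcal R)$, setting $\Delta_n:=D_{\mathcal R}^{\xi_n}(\hat x,x_n)$ and $c_1:=1-\eta-\mu_0/(4\sigma)>0$, one has $\Delta_{n+1}\le\Delta_n-c_1\alpha_n\|F(x_n)-y\|^2$ for all $n\ge0$. Consequently $(\Delta_n)$ is monotonically nonincreasing and $\sum_{n=0}^\infty\alpha_n\|F(x_n)-y\|^2<\infty$.
   Context: Setting. Let $X,Y$ be real Hilbert spaces. Let $\mathcal R:X\to(-\infty,\infty]$ be proper, lower semicontinuous and strongly convex with constant $\sigma>0$, i.e. $\mathcal R(t\bar x+(1-t)x)+\sigma t(1-t)\|\bar x-x\|^2\le t\mathcal R(\bar x)+(1-t)\mathcal R(x)$ for all $\bar x,x\in\mathrm{dom}(\mathcal R)$ and $t\in[0,1]$. For $\xi\in\partial\mathcal R(x)$ (subdifferential) the Bregman distance is $D_{\mathcal R}^{\xi}(z,x)=\mathcal R(z)-\mathcal R(x)-\langle\xi,z-x\rangle$. The convex conjugate $\mathcal R^*$ is differentiable with $\|\nabla\mathcal R^*(\bar\xi)-\nabla\mathcal R^*(\xi)\|\le\|\bar\xi-\xi\|/(2\sigma)$, and $\nabla\mathcal R^*(\xi)=\arg\min_{x\in X}\{\mathcal R(x)-\langle\xi,x\rangle\}$ (unique minimizer), with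 $\xi\in\partial\mathcal R(\nabla\mathcal R^*(\xi))$. Let $F:\mathrm{dom}(F)\subset X\to Y$ and $y\in Y$. Assume: (b) there are $\rho>0$, $x_0\in X$, $\xi_0\in\partial\mathcal R(x_0)$ with $B_{2\rho}(x_0):=\{x:\|x-x_0\|\le 2\rho\}\subset\mathrm{dom}(F)$, and $F(x)=y$ has a solution $\bar x$ with $D_{\mathcal R}^{\xi_0}(\bar x,x_0)\le\sigma\rho^2$; (c) $F$ is weakly closed: if $x_n\in\mathrm{dom}(F)$, $x_n\rightharpoonup x$ and $F(x_n)\to v$, then $x\in\mathrm{dom}(F)$ and $F(x)=v$; (d) there are bounded linear operators $L(x):X\to Y$, $x\in B_{2\rho}(x_0)$, with $x\mapsto L(x)$ continuous on $B_{2\rho}(x_0)$, a constant $\eta\in[0,1)$ with $\|F(x)-F(\bar x)-L(\bar x)(x-\bar x)\|\le\eta\|F(x)-F(\bar x)\|$ for all $x,\bar x\in B_{2\rho}(x_0)$, and a constant $L>0$ with $\|L(x)\|\le L$ on $B_{2\rho}(x_0)$. Algorithm 2 (exact data $y$). Parameters: $\beta\in(0,\infty]$, $\mu_0>0$, $\mu_1>0$, and a fixed choice of step-size rule: (constant) $\alpha_n=\mu_0/L^2$, or (adaptive) $\alpha_n=\min\{\mu_0\|r_n\|^2/\|g_n\|^2,\mu_1\}$ if $r_n\ne0$ and $\alpha_n=0$ if $r_n=0$ (with $\mu_0\|r_n\|^2/\|g_n\|^2:=+\infty$ if $g_n=0$). Set $\xi_{-1}=\xi_0$, $x_0=\nabla\mathcal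 R^*(\xi_0)$. For all $n\ge0$ (no stopping): $r_n:=F(x_n)-y$, $g_n:=L(x_n)^*r_n$, $\alpha_n$ by the chosen rule; $m_n:=\xi_n-\xi_{n-1}$; $\tilde\gamma_0:=0$ and for $n\ge1$, $\tilde\gamma_n:=\langle m_n,x_n-x_{n-1}\rangle-(1-\eta)\alpha_{n-1}\|r_{n-1}\|^2+\beta_{n-1}\tilde\gamma_{n-1}$; $\beta_n:=\min\{\max\{0,(\alpha_n\langle g_n,m_n\rangle-2\sigma\tilde\gamma_n)/\|m_n\|^2\},\beta\}$ if $m_n\ne0$ and $\beta_n:=0$ if $m_n=0$; $\xi_{n+1}:=\xi_n-\alpha_ng_n+\beta_nm_n$, $x_{n+1}:=\nabla\mathcal R^*(\xi_{n+1})$. *)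

From HB Require Import structures.
From mathcomp Require Import all_boot all_order all_algebra.
From mathcomp Require Import all_classical all_reals all_analysis.
Set Implicit Arguments. Unset Strict Implicit. Unset Printing Implicit Defensive.
Import Order.TTheory GRing.Theory Num.Theory.
Local Open Scope ring_scope.

Section Defs.
Variable R : realType.

Section Space.
Variable V : lmodType R.
Variable ip : V -> V -> R.

Definition nrm (v : V) : R := Num.sqrt (ip v v).

Definition ncvg (u : nat -> V) (z : V) : Prop :=
  forall e : R, 0 < e -> exists N : nat, forall n, (N <= n)%N -> nrm (u n - z) < e.
Definition ncauchy (u : nat -> V) : Prop :=
  forall e : R, 0 < e -> exists N : nat, forall n m, (N <= n)%N -> (N <= m)%N ->
    nrm (u n - u m) < e.

Definition wcvg (u : nat -> V) (z : V) : Prop :=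
  forall w : V, forall e : R, 0 < e -> exists N : nat, forall n, (N <= n)%N ->
    `| ip w (u n) - ip w z | < e.

Definition is_hilbert : Prop :=
  [/\ (forall u v, ip u v = ip v u),
      (forall (a : R) u v w, ip (a *: u + v) w = a * ip u w + ip v w),
      (forall u, 0 <= ip u u),
      (forall u, ip u u = 0 -> u = 0)
    & (forall u : nat -> V, ncauchy u -> exists z, ncvg u z)].

Definition cball (c : V) (r : R) : set V := [set z | nrm (z - c) <= r].

(* functionals V -> (-oo, +oo] *)
Definition dom (f : V -> \bar R) : set V := [set z | f z \is a fin_num].

Definition proper_fun (f : V -> \bar R) : Prop :=
  (exists z, f z \is a fin_num) /\ (forall z, f z != -oo%E).

Definition lsc (f : V -> \bar R) : Prop :=
  forall (z : V) (a : R), (a%:E < f z)%E ->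
    exists d : R, 0 < d /\ forall w, nrm (w - z) < d -> (a%:E < f w)%E.

Definition strongly_convex (f : V -> \bar R) (sigma : R) : Prop :=
  forall xb x : V, dom f xb -> dom f x -> forall t : R, 0 <= t <= 1 ->
    (f ((t *: xb + (1 - t) *: x)%R) + (sigma * t * (1 - t) * nrm (xb - x) ^+ 2)%:E
      <= t%:E * f xb + (1 - t)%:E * f x)%E.

Definition subdiff (f : V -> \bar R) (x xi : V) : Prop :=
  dom f x /\ forall z, (f x + (ip xi (z - x))%:E <= f z)%E.

Definition bregman (f : V -> \bar R) (xi z x : V) : \bar R :=
  (f z - f x - (ip xi (z - x))%:E)%E.

(* x is a minimizer of z |-> f z - <xi, z>, i.e. x = grad f^*(xi) *)
Definition is_argmin_lin (f : V -> \bar R) (xi x : V) : Prop :=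
  dom f x /\ forall z, (f x - (ip xi x)%:E <= f z - (ip xi z)%:E)%E.

End Space.

Definition cap_beta (q : R) (beta : \bar R) : R :=
  match beta with
  | EFin b => Num.min (Num.max 0 q) b
  | _ => Num.max 0 q
  end.

(* adaptive step size; mu0 |r|^2/|g|^2 := +oo when g = 0 *)
Definition step_adapt (X Y : lmodType R) (ipX : X -> X -> R) (ipY : Y -> Y -> R)
  (mu0 mu1 : R) (r : Y) (g : X) : R :=
  if r == 0 then 0
  else if g == 0 then mu1
  else Num.min (mu0 * nrm ipY r ^+ 2 / nrm ipX g ^+ 2) mu1.

(* m_n := xi_n - xi_{n-1} with xi_{-1} := xi_0, so m_0 = 0 *)
Definition mom (X : lmodType R) (xi : nat -> X) (n : nat) : X :=
  if n is k.+1 then xi n - xi k else 0.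

End Defs.

(* Everything is controlled by the Bregman distances [Delta n] of a solution [xh] to the
   iterates.  Strong convexity of [Rf] and Young's inequality bound [Delta n.+1 - Delta n] by
   [<xi n.+1 - xi n, x n - xh> + |xi n.+1 - xi n|^2 / (4 sigma)].  By the tangential cone condition
   [-g n] is a descent direction, [<g n, xh - x n> <= -(1 - eta) |F (x n) - y|^2], and [gam n] is
   an upper bound for [<mom xi n, x n - xh>]; the choice of [bet n] makes the momentum term cost
   nothing, which leaves a decrease by [c1 * alpha n * |F (x n) - y|^2].  For the solution of
   assumption (b) this is first used, by strong induction, to keep the iterates in the ball where
   the assumptions on [F] hold; summability then follows by telescoping. *)

From mathcomp Require Import all_boot all_order all_algebra.
From mathcomp Require Import all_classical all_reals all_analysis.
From mathcomp Require Import ring lra.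
Import Order.TTheory GRing.Theory Num.Theory.
Set Implicit Arguments. Unset Strict Implicit.
Local Open Scope ring_scope.

Section InnerProduct.
Variables (R : realType) (V : lmodType R) (ip : V -> V -> R).
Hypothesis Hip : is_hilbert ip.

Lemma ipC u v : ip u v = ip v u.
Proof. by case: Hip. Qed.

Lemma ipDZl a u v w : ip (a *: u + v) w = a * ip u w + ip v w.
Proof. by case: Hip. Qed.

Lemma ip_ge0 u : 0 <= ip u u.
Proof. by case: Hip. Qed.

Lemma ip_eq0 u : ip u u = 0 -> u = 0.
Proof. by case: Hip => _ _ _ + _; apply. Qed.

Lemma ip0l w : ip 0 w = 0.
Proof. by have := ipDZl 1 0 0 w; rewrite scaler0 addr0 mul1r; lra. Qed.

Lemma ipZl a u w : ip (a *: u) w = a * ip u w.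
Proof. by rewrite -[a *: u]addr0 ipDZl ip0l addr0. Qed.

Lemma ipDl u v w : ip (u + v) w = ip u w + ip v w.
Proof. by rewrite -[u]scale1r ipDZl mul1r scale1r. Qed.

Lemma ipNl u w : ip (- u) w = - ip u w.
Proof. by rewrite -scaleN1r ipZl mulN1r. Qed.

Lemma ipBl u v w : ip (u - v) w = ip u w - ip v w.
Proof. by rewrite ipDl ipNl. Qed.

Lemma ipZr a u w : ip w (a *: u) = a * ip w u.
Proof. by rewrite ipC ipZl ipC. Qed.

Lemma ipDr u v w : ip w (u + v) = ip w u + ip w v.
Proof. by rewrite ipC ipDl !(ipC w). Qed.

Lemma ipNr u w : ip w (- u) = - ip w u.
Proof. by rewrite ipC ipNl ipC. Qed.

Lemma ipBr u v w : ip w (u - v) = ip w u - ip w v.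
Proof. by rewrite ipDr ipNr. Qed.

Lemma ipNN u : ip (- u) (- u) = ip u u.
Proof. by rewrite ipNl ipNr opprK. Qed.

Lemma sqr_nrm u : nrm ip u ^+ 2 = ip u u.
Proof. by rewrite sqr_sqrtr // ip_ge0. Qed.

Lemma nrm_ge0 u : 0 <= nrm ip u.
Proof. exact: sqrtr_ge0. Qed.

Lemma nrmN u : nrm ip (- u) = nrm ip u.
Proof. by rewrite /nrm ipNN. Qed.

Lemma nrm_le u c : 0 <= c -> ip u u <= c ^+ 2 -> nrm ip u <= c.
Proof. by move=> c0; rewrite -sqr_nrm; have := nrm_ge0 u; nra. Qed.

(* Young's inequality [<u, v> <= |u|^2 / (4 s) + s |v|^2], from [|u - 2 s v|^2 >= 0]. *)
Lemma ip_le_young s u v : 0 < s -> ip u v - s * ip v v <= ip u u / (4 * s).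
Proof.
move=> s0; have := ip_ge0 (u - (2 * s) *: v).
rewrite !(ipBl, ipBr, ipZl, ipZr) (ipC v u) ler_pdivlMr; nra.
Qed.

Lemma ip_sqr_le u v : ip u v ^+ 2 <= ip u u * ip v v.
Proof.
have [->|v0] := eqVneq v 0; first by rewrite ip0l ipC ip0l expr0n mulr0.
have vv : 0 < ip v v.
  by rewrite lt_def ip_ge0 andbT (contra_neq (@ip_eq0 v)).
have := ip_ge0 (ip v v *: u - ip u v *: v).
rewrite !(ipBl, ipBr, ipZl, ipZr) (ipC v u) => h.
rewrite -(ler_pM2l vv); nra.
Qed.

Lemma ip_le_nrm u v : ip u v <= nrm ip u * nrm ip v.
Proof.
rewrite /nrm -sqrtrM ?ip_ge0 //; apply: le_trans (ler_norm _) _.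
by rewrite -sqrtr_sqr ler_wsqrtr // ip_sqr_le.
Qed.

Lemma nrmD_le u v : nrm ip (u + v) <= nrm ip u + nrm ip v.
Proof.
apply: nrm_le; first by rewrite addr_ge0 ?nrm_ge0.
have := ip_le_nrm u v; rewrite ipDl !ipDr (ipC v u) -!sqr_nrm; nra.
Qed.

Lemma ip_le_of_nrmD_le eta r v :
  0 <= eta -> nrm ip (r + v) <= eta * nrm ip r -> ip r v <= - (1 - eta) * ip r r.
Proof.
move=> eta0 h; have := ip_le_nrm r (r + v); rewrite ipDr -sqr_nrm.
have := nrm_ge0 r; have := nrm_ge0 (r + v); nra.
Qed.

Definition rbregman (f : V -> \bar R) (xi z x : V) : R :=
  fine (f z) - fine (f x) - ip xi (z - x).

Lemma bregmanE f xi z x :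
  dom f z -> dom f x -> bregman ip f xi z x = (rbregman f xi z x)%:E.
Proof.
rewrite /dom /bregman /rbregman /=.
by case: (f z) => // a _; case: (f x) => // b _; rewrite -!EFinB.
Qed.

Lemma dom_of_bregman_le f xi z x c :
  proper_fun f -> dom f x -> (bregman ip f xi z x <= c%:E)%E -> dom f z.
Proof.
move=> [_ /(_ z)]; rewrite /dom /bregman /=.
by case: (f z) => // _; case: (f x).
Qed.

End InnerProduct.

Lemma le_of_forall_1Bmul_le (R : realFieldType) (a b : R) :
  0 <= a -> (forall t, 0 < t < 1 -> (1 - t) * a <= b) -> a <= b.
Proof.
move=> a0 hb; apply/ler_addgt0Pr => e e0.
have ae0 : 0 < a + e + e by lra.
have t01 : 0 < e / (a + e + e) < 1.
  by rewrite divr_gt0 //= ltr_pdivrMr //; lra.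
have ta : e / (a + e + e) * a <= e.
  by rewrite mulrAC ler_pdivrMr // ler_pM2l //; lra.
by have := hb _ t01; lra.
Qed.

Section StronglyConvex.
Variables (R : realType) (V : lmodType R) (ip : V -> V -> R).
Variables (f : V -> \bar R) (sigma : R).
Hypotheses (Hip : is_hilbert ip) (Hsigma : 0 < sigma).
Hypothesis Hfconv : strongly_convex ip f sigma.

(* Strong convexity on the segment from [xs] to [z] together with the minimality of [xs] gives
   the bound up to a factor [1 - t], [t] the position on the segment; then let [t] tend to 0. *)
Lemma rbregman_argmin_ge xi xs z : is_argmin_lin ip f xi xs -> dom f z ->
  sigma * ip (z - xs) (z - xs) <= rbregman ip f xi z xs.
Proof.
move=> [xs_dom xs_min] z_dom.
apply: le_of_forall_1Bmul_le => [|t /andP[t0 t1]].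
  by rewrite mulr_ge0 ?(ip_ge0 Hip) ?ltW.
set w := t *: z + (1 - t) *: xs.
have t01 : 0 <= t <= 1 by rewrite !ltW.
have := Hfconv z_dom xs_dom t01.
have := xs_min w; rewrite /rbregman -(sqr_nrm Hip).
move: z_dom xs_dom; rewrite /dom /=.
case: (f z) => // fz _; case: (f xs) => // fxs _.
case: (f w) => [fw | | ] //=; rewrite -!EFinD !lee_fin /w.
rewrite !(ipDr Hip, ipNr Hip, ipZr Hip) => min_at_w convex_at_w.
by rewrite -(ler_pM2l t0); lra.
Qed.

Lemma rbregman_update_le xi xi' xs xs' z :
  is_argmin_lin ip f xi xs -> dom f xs' -> dom f z ->
  rbregman ip f xi' z xs' <= rbregman ip f xi z xs + ip (xi' - xi) (xs - z)
                             + ip (xi' - xi) (xi' - xi) / (4 * sigma).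
Proof.
move=> xs_min xs'_dom z_dom.
have := rbregman_argmin_ge xs_min xs'_dom.
have := ip_le_young Hip (xi' - xi) (xs' - xs) Hsigma.
rewrite /rbregman !(ipBl Hip, ipBr Hip); lra.
Qed.

End StronglyConvex.

Lemma cap_beta_ge0 (R : realType) (q : R) (b : \bar R) : (0 < b)%E -> 0 <= cap_beta q b.
Proof.
case: b => [b| |] //= b0; last by rewrite le_max lexx.
by rewrite lte_fin in b0; rewrite le_min le_max lexx /= ltW.
Qed.

Lemma cap_beta_le_max (R : realType) (q : R) (b : \bar R) : cap_beta q b <= Num.max 0 q.
Proof. by case: b => [b| |] //=; rewrite ge_min lexx. Qed.

(* With [P = q M], the capped value [c] lies in [[0, max 0 q]], so [c (c M - 2 q M) <= 0]. *)
Lemma cap_beta_mul_le0 (R : realType) (P M : R) (b : \bar R) : (0 < b)%E -> 0 < M ->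
  cap_beta (P / M) b * (cap_beta (P / M) b * M - 2 * P) <= 0.
Proof.
move=> b0 M0; set q := P / M.
have -> : P = q * M by rewrite /q divfK // gt_eqF.
have c0 := cap_beta_ge0 q b0; have := cap_beta_le_max q b; set c := cap_beta q b.
have [_ c_le0|q0 cq] := leP q 0; last first.
  rewrite (_ : _ * _ = c * M * (c - 2 * q)); last by ring.
  by rewrite mulr_ge0_le0 ?mulr_ge0 ?(ltW M0) //; lra.
by rewrite (@le_anti _ _ c 0) ?c_le0 ?c0 // mul0r.
Qed.

Lemma step_adapt_ge0 (R : realType) (X Y : lmodType R) (ipX : X -> X -> R)
    (ipY : Y -> Y -> R) (mu0 mu1 : R) (r : Y) (g : X) :
  0 < mu0 -> 0 < mu1 -> 0 <= step_adapt ipX ipY mu0 mu1 r g.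
Proof.
move=> mu0_gt0 mu1_gt0; rewrite /step_adapt; case: eqP => // _.
case: eqP => _; first exact: ltW.
rewrite le_min (ltW mu1_gt0) andbT.
exact: divr_ge0 (mulr_ge0 (ltW mu0_gt0) (sqr_ge0 _)) (sqr_ge0 _).
Qed.

Lemma step_adapt_mul_le (R : realType) (X Y : lmodType R) (ipX : X -> X -> R)
    (ipY : Y -> Y -> R) (mu0 mu1 : R) (r : Y) (g : X) :
  is_hilbert ipX -> 0 < mu0 ->
  step_adapt ipX ipY mu0 mu1 r g * nrm ipX g ^+ 2 <= mu0 * nrm ipY r ^+ 2.
Proof.
move=> HX mu0_gt0.
have rhs_ge0 : 0 <= mu0 * nrm ipY r ^+ 2 by rewrite mulr_ge0 ?sqr_ge0 ?ltW.
rewrite /step_adapt; case: eqP => _; first by rewrite mul0r.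
case: eqP => [->|g0]; first by rewrite /nrm (ip0l HX) sqrtr0 expr0n mulr0.
have ng : 0 < nrm ipX g ^+ 2.
  by rewrite (sqr_nrm HX) lt_def (ip_ge0 HX) andbT; apply/eqP => /(ip_eq0 HX).
by rewrite -ler_pdivlMr // ge_min mulrA lexx.
Qed.

Lemma nneseries_lt_pinfty_of_descent (R : realType) (D a : nat -> R) (c : R) :
  0 < c -> (forall n, 0 <= a n) -> (forall n, 0 <= D n) ->
  (forall n, D n.+1 <= D n - c * a n) -> (\sum_(0 <= n <oo) (a n)%:E < +oo)%E.
Proof.
move=> c0 a0 D0 descent.
have partial_sum N : c * \sum_(0 <= n < N) a n <= D 0 - D N.
  elim: N => [|N IH]; first by rewrite big_geq // mulr0 subrr.
  by rewrite big_nat_recr //= mulrDr; have := descent N; lra.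
apply: (@le_lt_trans _ _ (D 0 / c)%:E); last exact: ltry.
apply: lime_le; first by apply: is_cvg_nneseries => n _ _; rewrite lee_fin.
apply: nearW => N /=; rewrite -EFin_sum_fine //= lee_fin ler_pdivlMr // mulrC.
by have := partial_sum N; have := D0 N; lra.
Qed.

Lemma descent_rate_gt0 (R : realFieldType) (sigma eta mu0 : R) :
  0 < sigma -> mu0 < 4 * sigma * (1 - eta) -> 0 < 1 - eta - mu0 / (4 * sigma).
Proof. by move=> s0 mu0_lt; rewrite subr_gt0 ltr_pdivrMr ?mulr_gt0 // mulrC. Qed.

Section TwoPointGradient.
Variables (R : realType) (X Y : lmodType R) (ipX : X -> X -> R) (ipY : Y -> Y -> R).
Variables (Rf : X -> \bar R) (sigma : R) (F : X -> Y) (y : Y) (rho : R) (x0 xi0 : X).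
Variables (L : X -> X -> Y) (eta Lc : R) (beta : \bar R) (mu0 mu1 : R) (adaptive : bool).
Variables (x xi g : nat -> X) (alpha bet gam : nat -> R).
Hypotheses (HX : is_hilbert ipX) (HY : is_hilbert ipY).
Hypotheses (Hsigma : 0 < sigma) (HRprop : proper_fun Rf).
Hypothesis HRconv : strongly_convex ipX Rf sigma.
Hypothesis Hrho : 0 < rho.
Local Notation B := (cball ipX x0 (2 * rho)).
Hypothesis Heta : 0 <= eta < 1.
Hypothesis Htcc : forall z zb, B z -> B zb ->
  nrm ipY (F z - F zb - L zb (z - zb)) <= eta * nrm ipY (F z - F zb).
Hypothesis HLc : 0 < Lc.
Hypothesis HLbd : forall z, B z -> forall h, nrm ipY (L z h) <= Lc * nrm ipX h.
Hypotheses (Hbeta : (0 < beta)%E) (Hmu0 : 0 < mu0) (Hmu1 : 0 < mu1).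
Hypothesis Hmu0s : mu0 < 4 * sigma * (1 - eta).
Hypotheses (Halg_xi0 : xi 0 = xi0) (Halg_x0 : x 0 = x0).
Hypothesis Halg_x : forall n, is_argmin_lin ipX Rf (xi n) (x n).
Hypothesis Halg_g : forall n h, ipX (g n) h = ipY (F (x n) - y) (L (x n) h).
Hypothesis Halg_alpha : forall n, alpha n =
  if adaptive then step_adapt ipX ipY mu0 mu1 (F (x n) - y) (g n) else mu0 / Lc ^+ 2.
Hypothesis Halg_gam0 : gam 0 = 0.
Hypothesis Halg_gam : forall n, gam n.+1 =
  ipX (mom xi n.+1) (x n.+1 - x n)
  - (1 - eta) * alpha n * nrm ipY (F (x n) - y) ^+ 2 + bet n * gam n.
Hypothesis Halg_bet : forall n, bet n =
  if mom xi n == 0 then 0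
  else cap_beta ((alpha n * ipX (g n) (mom xi n) - 2 * sigma * gam n)
                   / nrm ipX (mom xi n) ^+ 2) beta.
Hypothesis Halg_xi : forall n, xi n.+1 = xi n - alpha n *: g n + bet n *: mom xi n.

Local Notation res n := (F (x n) - y).
Local Notation c1 := (1 - eta - mu0 / (4 * sigma)).
Local Notation D z n := (rbregman ipX Rf (xi n) z (x n)).

Lemma momS n : mom xi n.+1 = - (alpha n *: g n) + bet n *: mom xi n.
Proof. by rewrite /= Halg_xi addrAC [_ - xi n]addrAC subrr add0r. Qed.

Lemma alpha_ge0 n : 0 <= alpha n.
Proof.
rewrite Halg_alpha; case: adaptive; first exact: step_adapt_ge0.
by rewrite divr_ge0 ?sqr_ge0 ?ltW.
Qed.

Lemma grad_nrm_le n : B (x n) -> nrm ipX (g n) <= Lc * nrm ipY (res n).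
Proof.
move=> xnB; have := ip_le_nrm HY (res n) (L (x n) (g n)).
rewrite -Halg_g -(sqr_nrm HX) => g_sqr_le.
have r_ge0 := nrm_ge0 ipY (res n); have Lg_le := ler_wpM2l r_ge0 (HLbd xnB (g n)).
have [g_le0|g_gt0] := leP (nrm ipX (g n)) 0.
  exact: le_trans g_le0 (mulr_ge0 (ltW HLc) r_ge0).
by rewrite -(ler_pM2r g_gt0) -expr2; lra.
Qed.

Lemma alpha_grad_le n : B (x n) ->
  alpha n * nrm ipX (g n) ^+ 2 <= mu0 * nrm ipY (res n) ^+ 2.
Proof.
move=> xnB; rewrite Halg_alpha; case: adaptive; first exact: step_adapt_mul_le.
have g_le : nrm ipX (g n) ^+ 2 <= Lc ^+ 2 * nrm ipY (res n) ^+ 2.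
  by rewrite -exprMn; have := grad_nrm_le xnB; have := nrm_ge0 ipX (g n); nra.
apply: le_trans (ler_wpM2l _ g_le) _; first by rewrite divr_ge0 ?sqr_ge0 ?ltW.
by rewrite mulrA divfK // expf_neq0 // gt_eqF.
Qed.

Lemma bet_ge0 n : 0 <= bet n.
Proof. by rewrite Halg_bet; case: ifP => // _; exact: cap_beta_ge0. Qed.

Lemma bet_mul_le0 n :
  bet n * (bet n * ipX (mom xi n) (mom xi n)
           - 2 * (alpha n * ipX (g n) (mom xi n) - 2 * sigma * gam n)) <= 0.
Proof.
rewrite Halg_bet; case: eqP => [_|m_neq0]; first by rewrite mul0r.
rewrite -(sqr_nrm HX); apply: cap_beta_mul_le0 => //.
by rewrite (sqr_nrm HX) lt_def (ip_ge0 HX) andbT; apply/eqP => /(ip_eq0 HX).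
Qed.

Lemma grad_ip_le n z : B (x n) -> B z -> F z = y ->
  ipX (g n) (z - x n) <= - (1 - eta) * ipY (res n) (res n).
Proof.
move=> xnB zB Fz; rewrite Halg_g; apply: (ip_le_of_nrmD_le HY); first by case/andP: Heta.
rewrite -(nrmN HY (res n)) opprB -(nrmN HY (_ + _)) opprD !opprB.
by have := Htcc zB xnB; rewrite Fz.
Qed.

Lemma mom_ip_le n z : B (x n) -> B z -> F z = y -> ipX (mom xi n) (x n - z) <= gam n ->
  ipX (mom xi n.+1) (x n - z)
    <= - (1 - eta) * alpha n * nrm ipY (res n) ^+ 2 + bet n * gam n.
Proof.
move=> xnB zB Fz mom_le.
rewrite momS (ipDl HX) (ipNl HX) !(ipZl HX) (sqr_nrm HY).
have := ler_wpM2l (alpha_ge0 n) (grad_ip_le xnB zB Fz); rewrite -opprB (ipNr HX).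
have := ler_wpM2l (bet_ge0 n) mom_le.
lra.
Qed.

Lemma mom_ip_step n z : B (x n) -> B z -> F z = y ->
  ipX (mom xi n) (x n - z) <= gam n -> ipX (mom xi n.+1) (x n.+1 - z) <= gam n.+1.
Proof.
move=> xnB zB Fz mom_le; have := mom_ip_le xnB zB Fz mom_le.
have -> : x n.+1 - z = (x n.+1 - x n) + (x n - z) by rewrite addrA subrK.
by rewrite Halg_gam (ipDr HX (x n.+1 - x n)); lra.
Qed.

(* The momentum weight [bet n] is chosen exactly so that the momentum part of the dual step
   costs no more than the plain gradient step [alpha n * g n]. *)
Lemma mom_sqr_le n : B (x n) ->
  ipX (mom xi n.+1) (mom xi n.+1) / (4 * sigma) + bet n * gam n
    <= mu0 / (4 * sigma) * (alpha n * nrm ipY (res n) ^+ 2).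
Proof.
move=> xnB; have s4 : 0 < 4 * sigma by rewrite mulr_gt0.
have := ler_wpM2l (alpha_ge0 n) (alpha_grad_le xnB); have := bet_mul_le0 n.
rewrite !(sqr_nrm HX, sqr_nrm HY) => beta_choice alpha_choice.
rewrite -(ler_pM2r s4) mulrDl (divfK (lt0r_neq0 s4)).
rewrite [X in _ <= X]mulrAC (divfK (lt0r_neq0 s4)) momS.
rewrite !(ipDl HX, ipDr HX, ipNl HX, ipNr HX, ipZl HX, ipZr HX) (ipC HX (mom xi n)).
lra.
Qed.

Lemma rbregman_descent_step n z : B (x n) -> B z -> F z = y -> dom Rf z ->
  ipX (mom xi n) (x n - z) <= gam n ->
  D z n.+1 <= D z n - c1 * (alpha n * nrm ipY (res n) ^+ 2).
Proof.
move=> xnB zB Fz z_dom mom_le.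
have := rbregman_update_le HX Hsigma HRconv (xi n.+1) (Halg_x n) (Halg_x n.+1).1 z_dom.
have := mom_ip_le xnB zB Fz mom_le; have := mom_sqr_le xnB; rewrite /=; lra.
Qed.

Lemma fejer_chain z : B z -> F z = y -> dom Rf z ->
  forall n, (forall k, (k < n)%N -> B (x k)) ->
  ipX (mom xi n) (x n - z) <= gam n /\ D z n <= D z 0.
Proof.
move=> zB Fz z_dom; elim=> [|n IH] xB; first by split; rewrite //= (ip0l HX) Halg_gam0.
have [mom_le Dn_le] := IH (fun k lt_kn => xB k (ltnW lt_kn)).
have xnB := xB n (ltnSn n).
split; first exact: mom_ip_step xnB zB Fz mom_le.
have := rbregman_descent_step xnB zB Fz z_dom mom_le.
have := mulr_ge0 (ltW (descent_rate_gt0 Hsigma Hmu0s))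
                 (mulr_ge0 (alpha_ge0 n) (sqr_ge0 (nrm ipY (res n)))).
lra.
Qed.

Lemma near_of_rbregman_le z n :
  dom Rf z -> D z n <= sigma * rho ^+ 2 -> nrm ipX (z - x n) <= rho.
Proof.
move=> z_dom D_le; apply: (nrm_le HX (ltW Hrho)); rewrite -(ler_pM2l Hsigma).
exact: le_trans (rbregman_argmin_ge HX Hsigma HRconv (Halg_x n) z_dom) D_le.
Qed.

(* The solution [xb] of assumption (b) stays within [rho] of every iterate, because its
   Bregman distance to the iterates does not increase; hence the iterates stay in [B]. *)
Lemma iterates_in_ball xb : F xb = y ->
  (bregman ipX Rf xi0 xb x0 <= (sigma * rho ^+ 2)%:E)%E -> forall n, B (x n).
Proof.
move=> Fxb xb_near.
have x0_dom : dom Rf x0 by rewrite -Halg_x0; exact: (Halg_x 0).1.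
have xb_dom := dom_of_bregman_le HRprop x0_dom xb_near.
have D0_le : D xb 0 <= sigma * rho ^+ 2.
  by move: xb_near; rewrite (bregmanE _ _ xb_dom x0_dom) lee_fin Halg_xi0 Halg_x0.
have xb_x0 := near_of_rbregman_le xb_dom D0_le; rewrite Halg_x0 in xb_x0.
have xbB : B xb by rewrite /cball /=; move: xb_x0 Hrho; lra.
elim/ltn_ind => n IH; have [_ Dn_le] := fejer_chain xbB Fxb xb_dom IH.
have := near_of_rbregman_le xb_dom (le_trans Dn_le D0_le); rewrite /cball /=.
have -> : x n - x0 = (x n - xb) + (xb - x0) by rewrite addrA subrK.
have := nrmD_le HX (x n - xb) (xb - x0); rewrite -opprB (nrmN HX).
lra.
Qed.

Lemma rbregman_descent z : (forall n, B (x n)) -> B z -> F z = y -> dom Rf z ->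
  forall n, D z n.+1 <= D z n - c1 * (alpha n * nrm ipY (res n) ^+ 2).
Proof.
move=> xB zB Fz z_dom n.
have [mom_le _] := fejer_chain zB Fz z_dom (fun k (_ : (k < n)%N) => xB k).
exact: rbregman_descent_step (xB n) zB Fz z_dom mom_le.
Qed.

Lemma rbregman_iter_ge0 z n : dom Rf z -> 0 <= D z n.
Proof.
move=> z_dom; have := rbregman_argmin_ge HX Hsigma HRconv (Halg_x n) z_dom.
by apply: le_trans; rewrite mulr_ge0 ?(ip_ge0 HX) ?ltW.
Qed.

End TwoPointGradient.

Theorem mainTheorem5
  (R : realType) (X Y : lmodType R)
  (ipX : X -> X -> R) (ipY : Y -> Y -> R)
  (Rf : X -> \bar R) (sigma : R)
  (domF : set X) (F : X -> Y) (y : Y)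
  (rho : R) (x0 xi0 : X)
  (L : X -> X -> Y) (eta Lc : R)
  (beta : \bar R) (mu0 mu1 : R) (adaptive : bool)
  (x xi g : nat -> X) (alpha bet gam : nat -> R)
  (* Setting: Hilbert spaces, R proper lsc sigma-strongly convex *)
  (HX : is_hilbert ipX) (HY : is_hilbert ipY)
  (Hsigma : 0 < sigma) (HRprop : proper_fun Rf) (HRlsc : lsc ipX Rf)
  (HRconv : strongly_convex ipX Rf sigma)
  (* (b) *)
  (Hrho : 0 < rho) (Hxi0 : subdiff ipX Rf x0 xi0)
  (HBdom : forall z, cball ipX x0 (2 * rho) z -> domF z)
  (Hsol : exists xb, domF xb /\ F xb = y /\
            (bregman ipX Rf xi0 xb x0 <= (sigma * rho ^+ 2)%:E)%E)
  (* (c) weak closedness *)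
  (HFweak : forall (u : nat -> X) (z : X) (v : Y), (forall n, domF (u n)) ->
            wcvg ipX u z -> ncvg ipY (fun n => F (u n)) v -> domF z /\ F z = v)
  (* (d) *)
  (HLlin : forall z, cball ipX x0 (2 * rho) z ->
            forall (a : R) h k, L z (a *: h + k) = a *: L z h + L z k)
  (HLcont : forall z, cball ipX x0 (2 * rho) z -> forall e : R, 0 < e ->
            exists d : R, 0 < d /\ forall w, cball ipX x0 (2 * rho) w ->
              nrm ipX (w - z) < d -> forall h, nrm ipY (L w h - L z h) <= e * nrm ipX h)
  (Heta : 0 <= eta < 1)
  (Htcc : forall z zb, cball ipX x0 (2 * rho) z -> cball ipX x0 (2 * rho) zb ->
            nrm ipY (F z - F zb - L zb (z - zb)) <= eta * nrm ipY (F z - F zb))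
  (HLc : 0 < Lc)
  (HLbd : forall z, cball ipX x0 (2 * rho) z -> forall h, nrm ipY (L z h) <= Lc * nrm ipX h)
  (* parameters *)
  (Hbeta : (0 < beta)%E) (Hmu0 : 0 < mu0) (Hmu1 : 0 < mu1)
  (Hmu0s : mu0 < 4 * sigma * (1 - eta))
  (* Algorithm 2 with exact data y *)
  (Halg_xi0 : xi 0 = xi0) (Halg_x0 : x 0 = x0)
  (Halg_x : forall n, is_argmin_lin ipX Rf (xi n) (x n))
  (Halg_g : forall n h, ipX (g n) h = ipY (F (x n) - y) (L (x n) h))
  (Halg_alpha : forall n, alpha n =
      if adaptive then step_adapt ipX ipY mu0 mu1 (F (x n) - y) (g n)
      else mu0 / Lc ^+ 2)
  (Halg_gam0 : gam 0 = 0)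
  (Halg_gam : forall n, gam n.+1 =
      ipX (mom xi n.+1) (x n.+1 - x n)
      - (1 - eta) * alpha n * nrm ipY (F (x n) - y) ^+ 2 + bet n * gam n)
  (Halg_bet : forall n, bet n =
      if mom xi n == 0 then 0
      else cap_beta ((alpha n * ipX (g n) (mom xi n) - 2 * sigma * gam n)
                       / nrm ipX (mom xi n) ^+ 2) beta)
  (Halg_xi : forall n, xi n.+1 = xi n - alpha n *: g n + bet n *: mom xi n) :
  (forall n, cball ipX x0 (2 * rho) (x n)) /\
  forall xh : X, domF xh -> F xh = y -> cball ipX x0 (2 * rho) xh -> dom Rf xh ->
    let Delta := fun n => bregman ipX Rf (xi n) xh (x n) in
    let c1 := 1 - eta - mu0 / (4 * sigma) in
    [/\ 0 < c1,
        (forall n, (Delta n.+1 <= Delta n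
                     - (c1 * alpha n * nrm ipY (F (x n) - y) ^+ 2)%:E)%E),
        (forall n, (Delta n.+1 <= Delta n)%E)
      & (\sum_(0 <= n <oo) (alpha n * nrm ipY (F (x n) - y) ^+ 2)%:E < +oo)%E].
Proof.
have [xb [_ [Fxb xb_near]]] := Hsol.
have xB := iterates_in_ball HX HY Hsigma HRprop HRconv Hrho Heta Htcc HLc HLbd Hbeta
  Hmu0 Hmu1 Hmu0s Halg_xi0 Halg_x0 Halg_x Halg_g Halg_alpha Halg_gam0 Halg_gam Halg_bet
  Halg_xi Fxb xb_near.
split=> // xh _ Fxh xhB xh_dom /=.
have descent := rbregman_descent HX HY Hsigma HRconv Heta Htcc HLc HLbd Hbeta Hmu0 Hmu1
  Hmu0s Halg_x Halg_g Halg_alpha Halg_gam0 Halg_gam Halg_bet Halg_xi xB xhB Fxh xh_dom.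
have bregman_iterE n := bregmanE ipX (xi n) xh_dom (Halg_x n).1.
have c1_gt0 := descent_rate_gt0 Hsigma Hmu0s.
have step_ge0 n : 0 <= alpha n * nrm ipY (F (x n) - y) ^+ 2.
  exact: mulr_ge0 (alpha_ge0 Hmu0 Hmu1 Halg_alpha n) (sqr_ge0 _).
split=> // [n|n|].
- by rewrite !bregman_iterE -EFinB lee_fin -mulrA.
- rewrite !bregman_iterE lee_fin.
  by have := descent n; have := mulr_ge0 (ltW c1_gt0) (step_ge0 n); lra.
- exact: nneseries_lt_pinfty_of_descent c1_gt0 step_ge0
    (fun n => rbregman_iter_ge0 HX Hsigma HRconv Halg_x n xh_dom) descent.
Qed.
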